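(* Let $G$ be a connected planar graph, $R\ge1$ an integer and $\epsilon\in(0,1]$. There is an absolute constant $K$ such that for every pair $u,v$ of vertices, Algorithm TC with parameters $R,\epsilon$ separates $u$ and $v$ with probability at most $K\,d(u,v)/R$.
   Context: Let $G=(V,E)$ be a connected unweighted planar graph and $d(\cdot,\cdot)$ its shortest-path distance. Two vertices are separated if they lie in different output clusters. Algorithm TC with integer parameter $R\ge 1$ and $\epsilon\in(0,1]$: Phase 0: set $F=\emptyset$; choose an arbitrary root $r_0$, let the level of $x$ be its distance from $r_0$ in $G$, sample $k$ uniformly from $\{0,\dots,R-1\}$, and add to $F$ every edge joining a vertex at level $\ell$ to one at level $\ell+1$ with $\ell\equiv k\pmod R$. Then for phases $i=1,2$: for each connected component $C$ of $(V,E\setminus F)$ (components as at the start of the phase), choose as root $r_i$ the vertex of $C$ closest to the root $r_{i-1}$ used in the previous phase for the component from which $C$ arose (ties broken arbitrarily), let levels be distances from $r_i$ within $C$, sample $k_1$ uniformly from $\{0,\dots,R-1\}$, sample $\kappa\in(0,R]$ from the density $\epsilon\,\kappa^{\epsilon-1}/R^{\epsilon}$ and set $k_2=\lceil\kappa\rceil$, and add to $F$ every edge of $C$ joining a vertex at level $\ell$ to a vertex at level $\ell+1$ with $\ell\equiv k_1\pmod R$ or $\ell\equiv k_1+k_2\pmod R$. All samples are independent. Output the connected components of $(V,E\setminus F)$ as clusters. *)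

From HB Require Import structures.
From mathcomp Require Import all_boot all_order all_algebra perm.
From mathcomp Require Import reals exp.
Set Implicit Arguments. Unset Strict Implicit. Unset Printing Implicit Defensive.
Import Order.TTheory GRing.Theory Num.Theory.

Section Graph.
Variable V : finType.
Implicit Types (e : rel V) (x y : V).

Definition nbhd e (S : {set V}) : {set V} := S :|: [set y | [exists x in S, e x y]].
Definition ball e x (n : nat) : {set V} := iter n (nbhd e) [set x].
(* shortest-path distance in the graph (V,e); equals #|V| if unreachable *)
Definition gdist e x y : nat := find (fun n => y \in ball e x n) (iota 0 #|V|).
Definition comp e x : {set V} := [set y | connect e x y].

Definition darts e : {pred V * V} := [pred p | e p.1 p.2].
Definition swap_dart (p : V * V) : V * V := (p.2, p.1).
Definition rotation_system e (sigma : {perm (V * V)}) : Prop :=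
  (forall d, d \in darts e -> (sigma d \in darts e) /\ (sigma d).1 = d.1) /\
  (forall d d', d \in darts e -> d' \in darts e -> d.1 = d'.1 ->
     fconnect sigma d d').
(* faces of the embedding = orbits of the face permutation sigma o swap *)
Definition faces e (sigma : {perm (V * V)}) : nat :=
  fcard (fun d => sigma (swap_dart d)) (darts e).
(* a connected graph is planar iff it has no edge or admits a rotation
   system of genus 0, i.e. V - E + F = 2 (E = #darts / 2) *)
Definition planar e : Prop :=
  (forall x y, ~~ e x y) \/
  exists sigma, rotation_system e sigma /\
     #|V| + faces e sigma = (#|darts e| %/ 2 + 2)%N.

Definition connected_graph e : Prop := forall x y, connect e x y.

Definition cut_edge (lv : V -> nat) (P : pred nat) x y : bool :=
  ((lv y == (lv x).+1) && P (lv x)) || ((lv x == (lv y).+1) && P (lv y)).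
Definition remove_edges e (c : rel V) : rel V := fun x y => e x y && ~~ c x y.

Definition phase0 e (R : nat) (r0 : V) (k : nat) : rel V :=
  remove_edges e (cut_edge (gdist e r0) (fun l => l %% R == k)).

(* Arbitrary tie breaking: tb i C r M chooses, in phase i, for the component
   C whose parent component had root r, a vertex of the set M of vertices of C
   closest to r. *)
Definition tiebreak := nat -> {set V} -> V -> {set V} -> V.
Definition valid_tiebreak (tb : tiebreak) : Prop :=
  forall i C r M, M != set0 -> tb i C r M \in M.

(* root of the component of x in (V,ec) in phase i; ep is the graph of the
   previous phase and prv x the root used in that phase for the component
   from which x's component arose; closeness is measured in (V,ep). *)
Definition new_root (tb : tiebreak) (i : nat) (ep : rel V) (prv : V -> V)
    (ec : rel V) x : V :=
  let C := comp ec x in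
  let r := prv x in
  tb i C r [set y in C | [forall z in C, gdist ep r y <= gdist ep r z]].

(* edges cut in phase 1/2; the samples (k1,k2) of a component are indexed
   by its root *)
Definition phase_cut (R : nat) (root : V -> V) (ec : rel V)
    (s : V -> nat * nat) : rel V :=
  fun x y => let r := root x in
    cut_edge (gdist ec r)
      (fun l => (l %% R == (s r).1 %% R) || (l %% R == ((s r).1 + (s r).2) %% R))
      x y.

Definition TC_output e (R : nat) (r0 : V) (tb : tiebreak) (k : nat)
    (s1 s2 : V -> nat * nat) : rel V :=
  let e1 := phase0 e R r0 k in
  let rt1 := new_root tb 1 e (fun _ => r0) e1 in
  let e2 := remove_edges e1 (phase_cut R rt1 e1 s1) in
  let rt2 := new_root tb 2 e1 rt1 e2 in
  remove_edges e2 (phase_cut R rt2 e2 s2).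

Definition TC_separates e R r0 tb k s1 s2 (u v : V) : bool :=
  ~~ connect (TC_output e R r0 tb k s1 s2) u v.

End Graph.

Section Prob.
Local Open Scope ring_scope.
Variable rT : realType.

(* P(ceil kappa = j) for kappa with density eps kappa^(eps-1)/R^eps on (0,R] *)
Definition k2_weight (R : nat) (eps : rT) (j : nat) : rT :=
  (j%:R / R%:R) `^ eps - ((j.-1)%:R / R%:R) `^ eps.

(* a sample (a,b) : 'I_R * 'I_R encodes k1 = a, k2 = b+1 *)
Definition sample_weight (R : nat) (eps : rT) (ab : 'I_R * 'I_R) : rT :=
  R%:R^-1 * k2_weight R eps (ab.2).+1.
Definition decode (V : finType) (R : nat) (f : {ffun V -> 'I_R * 'I_R})
  : V -> nat * nat := fun x => (nat_of_ord (f x).1, (nat_of_ord (f x).2).+1).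

(* Probability that TC separates u and v: k uniform, and one independent
   sample (k1,k2) per potential root vertex for each of phases 1 and 2. *)
Definition TC_sep_prob (V : finType) (e : rel V) (R : nat) (eps : rT) (r0 : V)
    (tb : tiebreak V) (u v : V) : rT :=
  \sum_(k : 'I_R) \sum_(f1 : {ffun V -> 'I_R * 'I_R})
    \sum_(f2 : {ffun V -> 'I_R * 'I_R})
    (R%:R^-1 * (\prod_(x : V) sample_weight eps (f1 x))
             * (\prod_(x : V) sample_weight eps (f2 x)))
    * (TC_separates e R r0 tb k (decode f1) (decode f2) u v)%:R.
End Prob.

From HB Require Import structures.
From mathcomp Require Import all_boot all_order all_algebra perm.
From mathcomp Require Import reals exp lra.
Set Implicit Arguments. Unset Strict Implicit. Unset Printing Implicit Defensive.
Import Order.TTheory GRing.Theory Num.Theory.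
Local Open Scope ring_scope.

(** An edge [xy] can only be cut in a phase where the level of [x] or of [y]
    is a cut level.  The cut levels are the residue class of [k] modulo [R]
    in phase 0 and the classes of [k1] and [k1 + k2] in phases 1 and 2,
    where [k] and [k1] are uniform and independent of the levels they are
    compared with; so a given level is a cut level with probability at most
    [1/R] per class, and an edge is cut with probability at most [10/R].
    Separation is subadditive along a shortest [u]-[v] path. *)

Section Indicators.
Context {rT : numDomainType}.
Implicit Types a b : bool.

Lemma ler_nat_implyb a b : (a -> b) -> (a : nat)%:R <= (b : nat)%:R :> rT.
Proof. by case: a => [/(_ isT) -> //|_]; apply: ler0n. Qed.

Lemma natr_orb_le {a b} : ((a || b) : nat)%:R <= (a : nat)%:R + (b : nat)%:R :> rT.
Proof. by case: a; case: b; rewrite /= ?addr0 ?add0r // -natrD ler_nat. Qed.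

Lemma natr_andb_le {a b} : ((a && b) : nat)%:R <= (b : nat)%:R :> rT.
Proof. by case: a; case: b. Qed.

Lemma natr_cut_edge_le (V : finType) (lv : V -> nat) (P : pred nat) x y :
  (cut_edge lv P x y : nat)%:R <= (P (lv x) : nat)%:R + (P (lv y) : nat)%:R :> rT.
Proof. by apply: le_trans natr_orb_le _; apply: lerD; apply: natr_andb_le. Qed.

End Indicators.

Section WeightedAverage.
Variables (rT : numDomainType) (T : finType).
Implicit Types (w X Y : T -> rT) (c : rT).

Definition wavg w X : rT := \sum_t w t * X t.

Lemma eq_wavg w X Y : (forall t, X t = Y t) -> wavg w X = wavg w Y.
Proof. by move=> eXY; apply: eq_bigr => t _; rewrite eXY. Qed.

Lemma ler_wavg w X Y :
  (forall t, 0 <= w t) -> (forall t, X t <= Y t) -> wavg w X <= wavg w Y.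
Proof. by move=> w_ge0 leXY; apply: ler_sum => t _; rewrite ler_wpM2l. Qed.

Lemma wavgD w X Y : wavg w (fun t => X t + Y t) = wavg w X + wavg w Y.
Proof. by rewrite /wavg -big_split; apply: eq_bigr => t _; rewrite mulrDr. Qed.

Lemma wavg_cst w c : \sum_t w t = 1 -> wavg w (fun _ => c) = c.
Proof. by move=> w1; rewrite /wavg -mulr_suml w1 mul1r. Qed.

Lemma wavg_le_cst w X c : (forall t, 0 <= w t) -> \sum_t w t = 1 ->
  (forall t, X t <= c) -> wavg w X <= c.
Proof. by move=> w_ge0 w1 leXc; rewrite -(wavg_cst c w1); apply: ler_wavg. Qed.

End WeightedAverage.

(** The product weight on [{ffun V -> T}] models independent samples, one
    per vertex. *)
Section ProductWeight.
Variables (rT : numDomainType) (V T : finType) (w : T -> rT).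
Hypothesis w1 : \sum_t w t = 1.

Definition ffun_weight (f : {ffun V -> T}) : rT := \prod_x w (f x).

Lemma sum_ffun_weight : \sum_f ffun_weight f = 1.
Proof.
rewrite /ffun_weight -(bigA_distr_bigA (fun (x : V) t => w t)) /=.
by rewrite big1.
Qed.

Lemma wavg_ffun_marginal (r : V) (h : T -> rT) :
  wavg ffun_weight (fun f => h (f r)) = wavg w h.
Proof.
rewrite /wavg.
pose G x t := if x == r then w t * h t else w t.
transitivity (\sum_(f : {ffun V -> T}) \prod_x G x (f x)).
  apply: eq_bigr => f _; rewrite /ffun_weight (bigD1 r) // [RHS](bigD1 r) //=.
  rewrite /G eqxx mulrAC; congr (_ * _).
  by apply: eq_bigr => x /negbTE ->.
rewrite -(bigA_distr_bigA G) (bigD1 r) //= [X in _ * X]big1 ?mulr1.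
  by apply: eq_bigr => t _; rewrite /G eqxx.
by move=> x /negbTE xr; rewrite -w1; apply: eq_bigr => t _; rewrite /G xr.
Qed.

End ProductWeight.

Section Balls.
Variables (V : finType) (e : rel V).

Lemma path_last_ball x p : path e x p -> last x p \in ball e x (size p).
Proof.
elim/last_ind: p => [|p z IH]; first by rewrite inE.
rewrite rcons_path last_rcons size_rcons => /andP [/IH xp ez].
rewrite /ball iterS inE; apply/orP; right.
by rewrite inE; apply/existsP; exists (last x p); rewrite xp.
Qed.

Lemma connect_gdist_ball x y : connect e x y -> y \in ball e x (gdist e x y).
Proof.
move=> /connectP [p xp ->]; case/shortenP: xp => p' xp' up' _.
have size_p' : (size p' < #|V|)%N.
  by move: (card_uniqP up') => /= <-; apply: max_card.
have hit : has (fun n => last x p' \in ball e x n) (iota 0 #|V|).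
  by apply/hasP; exists (size p'); rewrite ?mem_iota ?path_last_ball.
have := hit; rewrite has_find size_iota => find_lt.
by have := nth_find 0 hit; rewrite nth_iota ?add0n.
Qed.

End Balls.

Lemma remove_edges3_cut (V : finType) (e c0 c1 c2 : rel V) x y : e x y ->
  ~~ connect (remove_edges (remove_edges (remove_edges e c0) c1) c2) x y ->
  [|| c0 x y, c1 x y | c2 x y].
Proof.
move=> exy; apply: contraR; rewrite !negb_or => /and3P [nc0 nc1 nc2].
by rewrite connect1 // /remove_edges exy nc0 nc1 nc2.
Qed.

Section Separation.
Variables (rT : realType) (R : nat) (eps : rT).
Hypotheses (R_gt0 : (0 < R)%N) (eps_gt0 : 0 < eps).

Let R_neq0 : R%:R != 0 :> rT.
Proof. by rewrite pnatr_eq0 -lt0n. Qed.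

Lemma k2_weight_ge0 j : 0 <= k2_weight R eps j.+1.
Proof.
rewrite /k2_weight subr_ge0 (ge0_ler_powR (ltW eps_gt0)) ?nnegrE ?divr_ge0 //.
by rewrite ler_pM2r ?ler_nat // invr_gt0 ltr0n.
Qed.

Lemma sum_k2_weight : \sum_(b < R) k2_weight R eps b.+1 = 1.
Proof.
have telescope n :
    \sum_(b < n) k2_weight R eps b.+1 = (n%:R / R%:R) `^ eps - 0 `^ eps.
  elim: n => [|n IH]; first by rewrite big_ord0 mul0r subrr.
  by rewrite big_ord_recr /= IH /k2_weight addrC addrA subrK.
by rewrite telescope powR0 ?gt_eqF // subr0 divff // powR1.
Qed.

Let sample := @sample_weight rT R eps.

Lemma sample_weight_ge0 ab : 0 <= sample ab.
Proof. by rewrite mulr_ge0 ?invr_ge0 ?ler0n ?k2_weight_ge0. Qed.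

Lemma sum_sample_weight : \sum_ab sample ab = 1.
Proof.
rewrite -(pair_bigA _ (fun a b => sample (a, b))) /sample /sample_weight /=.
under eq_bigr do rewrite -mulr_sumr sum_k2_weight mulr1.
by rewrite sumr_const card_ord -[_ *+ R]mulr_natr mulVf.
Qed.

Lemma sum_ord_modeq_le1 (m c : nat) :
  \sum_(a : 'I_R) ((m %% R == (a + c) %% R)%N : nat)%:R <= 1 :> rT.
Proof.
rewrite (eq_bigr (fun a : 'I_R => if (m %% R == (a + c) %% R)%N then 1 else 0));
  last by move=> a _; case: eqP.
rewrite -big_mkcond sumr_const lern1 /=.
apply/card_le1_eqP => a b; rewrite /= => /eqP ma /eqP mb; apply: val_inj.
by move: (etrans (esym ma) mb) => /eqP; rewrite eqn_modDr !modn_small // => /eqP.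
Qed.

(** The shift [c ab.2] is independent of the uniform coordinate [ab.1]. *)
Lemma wavg_sample_modeq_le (m : nat) (c : 'I_R -> nat) :
  wavg sample (fun ab => ((m %% R == (ab.1 + c ab.2) %% R)%N : nat)%:R) <= R%:R^-1.
Proof.
rewrite /wavg -(pair_bigA _ (fun a b => sample (a, b) *
  ((m %% R == (a + c b) %% R)%N : nat)%:R)) exchange_big /=.
apply: le_trans (_ : \sum_(b < R) R%:R^-1 * k2_weight R eps b.+1 <= _); last first.
  by rewrite -mulr_sumr sum_k2_weight mulr1.
apply: ler_sum => b _.
by rewrite /sample /sample_weight /= -mulr_sumr ler_piMr
  ?mulr_ge0 ?invr_ge0 ?ler0n ?k2_weight_ge0 ?sum_ord_modeq_le1.
Qed.

Definition cut_level (l : nat) (s : nat * nat) : bool :=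
  ((l %% R == s.1 %% R) || (l %% R == (s.1 + s.2) %% R))%N.

Section Vertices.
Variable V : finType.

Let Q := ffun_weight (V := V) sample.

Let Q_ge0 f : 0 <= Q f.
Proof. by apply: prodr_ge0 => x _; apply: sample_weight_ge0. Qed.

Let sum_Q : \sum_f Q f = 1.
Proof. exact/sum_ffun_weight/sum_sample_weight. Qed.

Lemma wavg_cut_level_le (r : V) (l : nat) :
  wavg Q (fun f => (cut_level l (decode f r) : nat)%:R) <= 2%:R / R%:R.
Proof.
rewrite (wavg_ffun_marginal sum_sample_weight r
  (fun ab => (cut_level l (nat_of_ord ab.1, (nat_of_ord ab.2).+1) : nat)%:R)).
apply: le_trans (_ : wavg sample (fun ab =>
    ((l %% R == (ab.1 + 0) %% R)%N : nat)%:R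
  + ((l %% R == (ab.1 + (nat_of_ord ab.2).+1) %% R)%N : nat)%:R) <= _).
  apply: ler_wavg => ab; first exact: sample_weight_ge0.
  by rewrite addn0; apply: natr_orb_le.
rewrite wavgD mulr2n mulrDl mul1r.
apply: lerD; first exact: (@wavg_sample_modeq_le l (fun _ => 0%N)).
exact: (@wavg_sample_modeq_le l (fun b => (nat_of_ord b).+1)).
Qed.

Let unif (_ : 'I_R) : rT := R%:R^-1.

Let sum_unif : \sum_k unif k = 1.
Proof. by rewrite sumr_const card_ord -[_ *+ R]mulr_natr mulVf. Qed.

Let unif_ge0 k : 0 <= unif k.
Proof. by rewrite invr_ge0 ler0n. Qed.

Definition sample_space := {ffun V -> 'I_R * 'I_R}.

Definition Ex (X : 'I_R -> sample_space -> sample_space -> rT) : rT :=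
  wavg unif (fun k => wavg Q (fun f1 => wavg Q (X k f1))).

Lemma ler_Ex X Y : (forall k f1 f2, X k f1 f2 <= Y k f1 f2) -> Ex X <= Ex Y.
Proof.
move=> leXY; apply: ler_wavg unif_ge0 _ => k.
by apply: ler_wavg Q_ge0 _ => f1; apply: ler_wavg Q_ge0 _ => f2.
Qed.

Lemma ExD X Y : Ex (fun k f1 f2 => X k f1 f2 + Y k f1 f2) = Ex X + Ex Y.
Proof.
rewrite /Ex -wavgD; apply: eq_wavg => k.
by rewrite -wavgD; apply: eq_wavg => f1; apply: wavgD.
Qed.

Lemma Ex_k_only (X : 'I_R -> rT) : Ex (fun k _ _ => X k) = wavg unif X.
Proof. by apply: eq_wavg => k; rewrite !wavg_cst ?sum_Q. Qed.

Lemma Ex_cut_phase0 (l : nat) :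
  Ex (fun k _ _ => ((l %% R == k)%N : nat)%:R) <= R%:R^-1.
Proof.
rewrite Ex_k_only /wavg -mulr_sumr -[leRHS]mulr1 ler_wpM2l ?invr_ge0 ?ler0n //.
apply: le_trans (sum_ord_modeq_le1 l 0); apply: ler_sum => k _.
by rewrite addn0 (modn_small (ltn_ord k)).
Qed.

Lemma Ex_cut_phase1 (r : 'I_R -> V) (l : 'I_R -> nat) :
  Ex (fun k f1 _ => (cut_level (l k) (decode f1 (r k)) : nat)%:R) <= 2%:R / R%:R.
Proof.
apply: wavg_le_cst unif_ge0 sum_unif _ => k.
under eq_wavg do rewrite wavg_cst ?sum_Q //.
exact: wavg_cut_level_le.
Qed.

Lemma Ex_cut_phase2 (r : 'I_R -> sample_space -> V)
    (l : 'I_R -> sample_space -> nat) :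
  Ex (fun k f1 f2 => (cut_level (l k f1) (decode f2 (r k f1)) : nat)%:R)
    <= 2%:R / R%:R.
Proof.
apply: wavg_le_cst unif_ge0 sum_unif _ => k.
apply: wavg_le_cst Q_ge0 sum_Q _ => f1; exact: wavg_cut_level_le.
Qed.

Variables (e : rel V) (r0 : V) (tb : tiebreak V).

Definition sep_ind (u v : V) (k : 'I_R) (f1 f2 : sample_space) : rT :=
  (TC_separates e R r0 tb k (decode f1) (decode f2) u v : nat)%:R.

Lemma TC_sep_probE u v : TC_sep_prob e R eps r0 tb u v = Ex (sep_ind u v).
Proof.
apply: eq_bigr => k _; rewrite mulr_sumr; apply: eq_bigr => f1 _.
by rewrite !mulr_sumr; apply: eq_bigr => f2 _; rewrite !mulrA.
Qed.

Lemma Ex_sep_diag u : Ex (sep_ind u u) <= 0.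
Proof.
apply: le_trans (_ : Ex (fun _ _ _ => 0) <= _).
  by apply: ler_Ex => k f1 f2; rewrite /sep_ind /TC_separates connect0.
by rewrite Ex_k_only wavg_cst.
Qed.

Lemma Ex_sep_triangle u v w :
  Ex (sep_ind u w) <= Ex (sep_ind u v) + Ex (sep_ind v w).
Proof.
rewrite -ExD; apply: ler_Ex => k f1 f2; rewrite /sep_ind /TC_separates.
apply: le_trans _ natr_orb_le; apply: ler_nat_implyb.
by apply: contraNT; rewrite negb_or !negbK => /andP [/connect_trans]; apply.
Qed.

Lemma Ex_sep_edge x y : e x y -> Ex (sep_ind x y) <= 10%:R / R%:R.
Proof.
move=> exy.
pose e1 k := phase0 e R r0 k.
pose rt1 k := new_root tb 1 e (fun _ => r0) (e1 k).
pose e2 k (f1 : sample_space) :=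
  remove_edges (e1 k) (phase_cut R (rt1 k) (e1 k) (decode f1)).
pose rt2 k f1 := new_root tb 2 (e1 k) (rt1 k) (e2 k f1).
pose cut0 z (k : 'I_R) (_ _ : sample_space) :=
  ((gdist e r0 z %% R == k)%N : nat)%:R : rT.
pose cut1 z (k : 'I_R) (f1 _ : sample_space) :=
  (cut_level (gdist (e1 k) (rt1 k x) z) (decode f1 (rt1 k x)) : nat)%:R : rT.
pose cut2 z (k : 'I_R) (f1 f2 : sample_space) :=
  (cut_level (gdist (e2 k f1) (rt2 k f1 x) z) (decode f2 (rt2 k f1 x)) : nat)%:R
  : rT.
have sep_le k f1 f2 : sep_ind x y k f1 f2 <=
    (cut0 x k f1 f2 + cut0 y k f1 f2) + ((cut1 x k f1 f2 + cut1 y k f1 f2)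
    + (cut2 x k f1 f2 + cut2 y k f1 f2)).
  apply: le_trans (ler_nat_implyb (remove_edges3_cut exy)) _.
  apply: le_trans natr_orb_le _; apply: lerD; first exact: natr_cut_edge_le.
  apply: le_trans natr_orb_le _; apply: lerD; exact: natr_cut_edge_le.
apply: le_trans (ler_Ex sep_le) _; rewrite !ExD.
apply: le_trans (lerD (lerD (Ex_cut_phase0 _) (Ex_cut_phase0 _))
  (lerD (lerD (Ex_cut_phase1 _ _) (Ex_cut_phase1 _ _))
  (lerD (Ex_cut_phase2 _ _) (Ex_cut_phase2 _ _)))) _.
lra.
Qed.

Lemma Ex_sep_ball u n v :
  v \in ball e u n -> Ex (sep_ind u v) <= n%:R * (10%:R / R%:R).
Proof.
elim: n v => [|n IH] v; first by rewrite inE => /eqP ->; rewrite mul0r Ex_sep_diag.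
rewrite /ball iterS -/(ball e u n) !inE => /orP [/IH uv|].
  by apply: le_trans uv _; rewrite ler_wpM2r ?ler_nat ?divr_ge0 ?ler0n.
move=> /existsP [z /andP [/IH uz ezv]]; apply: le_trans (Ex_sep_triangle u z v) _.
by rewrite -addn1 natrD mulrDl mul1r lerD ?Ex_sep_edge.
Qed.

End Vertices.
End Separation.

Theorem lemma2 (rT : realType) :
  exists K : rT,
  forall (V : finType) (e : rel V),
    symmetric e -> irreflexive e -> connected_graph e -> planar e ->
  forall (R : nat) (eps : rT), (1 <= R)%N -> 0 < eps <= 1 ->
  forall (r0 : V) (tb : tiebreak V), valid_tiebreak tb ->
  forall u v : V,
    TC_sep_prob e R eps r0 tb u v <= K * (gdist e u v)%:R / R%:R.
Proof.
exists 10%:R => V e _ _ conn _ R eps R_gt0 /andP [eps_gt0 _] r0 tb _ u v.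
rewrite TC_sep_probE.
apply: le_trans (Ex_sep_ball R_gt0 eps_gt0 r0 tb (connect_gdist_ball (conn u v))) _.
by rewrite mulrCA mulrA.
Qed.
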